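(* Let $W$ and $V$ be two B-DMCs such that $\lvert\Delta_{V}\rvert \prec_{icx} \lvert\Delta_{W}\rvert$. Then for any $\epsilon\in(0,1)$ and any function $\phi:[0,1]\to\mathbb{R}$ that is convex and increasing on $[0,1]$ with $\phi(0)=0$ and $\phi(1)=1$, we have $\mathcal{A}_{N}^{\phi,\epsilon}(V)\subset\mathcal{A}_{N}^{\phi,\epsilon}(W)$ for all $N=2^n$, $n\ge 1$.
   Context: For a binary-input discrete memoryless channel (B-DMC) $W:\{0,1\}\to\mathcal{Y}$, let $q_W(y)=\tfrac12(W(y|0)+W(y|1))$ and, for $q_W(y)>0$, $\Delta_W(y)=\frac{W(y|0)-W(y|1)}{W(y|0)+W(y|1)}$; $\Delta_W$ denotes the random variable $\Delta_W(Y)$ with $Y\sim q_W$. The polarization transforms are $W^-(y_1y_2|u_1)=\sum_{u_2\in\{0,1\}}\tfrac12 W(y_1|u_1\oplus u_2)W(y_2|u_2)$ (a channel $\{0,1\}\to\mathcal{Y}^2$) and $W^+(y_1y_2u_1|u_2)=\tfrac12 W(y_1|u_1\oplus u_2)W(y_2|u_2)$ (a channel $\{0,1\}\to\mathcal{Y}^2\times\{0,1\}$). For $s=(s_1,\dots,s_n)\in\{+,-\}^n$, $W^s$ is defined recursively by $W^{s_1\cdots s_n}=(W^{s_1\cdots s_{n-1}})^{s_n}$. For $\phi$ convex increasing on $[0,1]$ with $\phi(0)=0,\phi(1)=1$ and $\epsilon\in(0,1)$, the information set is $\mathcal{A}_{N}^{\phi,\epsilon}(W)=\{s\in\{+,-\}^n:\mathbb{E}[\phi(\lvert\Delta_{W^s}\rvert)]\ge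 1-\epsilon\}$, $N=2^n$. For real random variables, $X\prec_{icx}Y$ means $\mathbb{E}[\psi(X)]\le\mathbb{E}[\psi(Y)]$ for every increasing convex $\psi$ for which the expectations exist. *)

From HB Require Import structures.
From mathcomp Require Import all_boot all_order all_algebra.
Set Implicit Arguments. Unset Strict Implicit. Unset Printing Implicit Defensive.
Import Order.TTheory GRing.Theory Num.Theory.
Local Open Scope ring_scope.

(* A binary-input DMC with finite output alphabet [out]; input bit 0 is
   [false], input bit 1 is [true]; [tr y u] = W(y|u). *)
Record bdmc (R : realFieldType) := BDMC { out : finType; tr : out -> bool -> R }.
Arguments BDMC {R} out tr.
Arguments tr {R} b _ _.
Arguments out {R} b.

Definition is_bdmc (R : realFieldType) (W : bdmc R) : Prop :=
  (forall y u, 0 <= tr W y u) /\ (forall u, \sum_(y : out W) tr W y u = 1).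

Section Channel.
Variable R : realFieldType.
Implicit Types W : bdmc R.

Definition qW W (y : out W) : R := (tr W y false + tr W y true) / 2.

(* Delta_W(y), given the value 0 where q_W(y) = 0 (those points carry no mass). *)
Definition DeltaW W (y : out W) : R :=
  if qW (W:=W) y == 0 then 0
  else (tr W y false - tr W y true) / (tr W y false + tr W y true).

Definition minus_ch W : bdmc R :=
  BDMC (out W * out W)%type
    (fun y u1 => \sum_(u2 : bool) 2^-1 * tr W y.1 (addb u1 u2) * tr W y.2 u2).

Definition plus_ch W : bdmc R :=
  BDMC ((out W * out W) * bool)%type
    (fun y u2 => 2^-1 * tr W y.1.1 (addb y.2 u2) * tr W y.1.2 u2).

Inductive pm := Pl | Mi.

Definition step W (b : pm) : bdmc R :=
  match b with Pl => plus_ch W | Mi => minus_ch W end.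

Definition polar W (s : seq pm) : bdmc R := foldl step W s.

Definition Eabs W (f : R -> R) : R := \sum_(y : out W) qW (W:=W) y * f `|DeltaW y|.

Definition convex_on (P : R -> Prop) (f : R -> R) : Prop :=
  forall x y t, P x -> P y -> 0 <= t <= 1 ->
    f (t * x + (1 - t) * y) <= t * f x + (1 - t) * f y.

Definition nondecr_on (P : R -> Prop) (f : R -> R) : Prop :=
  forall x y, P x -> P y -> x <= y -> f x <= f y.

Definition icx_le V W : Prop :=
  forall psi : R -> R, nondecr_on (fun _ => True) psi -> convex_on (fun _ => True) psi ->
    Eabs V psi <= Eabs W psi.

(* s \in A_N^{phi,eps}(W), N = 2^(size s) *)
Definition infoset W (phi : R -> R) (eps : R) (s : seq pm) : Prop :=
  Eabs (polar W s) phi >= 1 - eps.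

End Channel.

From HB Require Import structures.
From mathcomp Require Import all_boot all_order all_algebra ring lra.
Set Implicit Arguments. Unset Strict Implicit. Unset Printing Implicit Defensive.
Import Order.TTheory GRing.Theory Num.Theory.
Local Open Scope ring_scope.

(* If two independent outputs have [|Delta|]-values [a] and [b], the minus transform has
   [|Delta| = ab], and the plus transform averages [psi(|Delta|)] into a kernel [g(a, b)]
   built from the perspective of [psi].  For [psi] convex and nondecreasing on [[0, 1]],
   both [a |-> psi(ab)] and [a |-> g(a, b)] are again convex and nondecreasing on [[0, 1]],
   and both kernels are symmetric, so exchanging [V] for [W] one coordinate at a time shows
   that each transform preserves the increasing convex order of [|Delta|].  Induction on [s]
   gives [E phi(|Delta_{V^s}|) <= E phi(|Delta_{W^s}|)], whence the inclusion of information
   sets.  The hypothesis only tests functions convex on all of [R]; since [|Delta|] takes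
   finitely many values, a test function on [[0, 1]] can be extended to [R] without changing
   it at those values. *)

Section Convexity.
Variable R : realFieldType.
Implicit Types (psi f : R -> R) (a b c k q r s t x y z : R).

Definition in01 x : Prop := 0 <= x <= 1.

Lemma in01_0 : in01 0. Proof. by rewrite /in01 lexx ler01. Qed.

Lemma in01_1 : in01 1. Proof. by rewrite /in01 ler01 lexx. Qed.

Definition persp psi s x := if s == 0 then 0 else s * psi (x / s).

Lemma perspE psi s x : 0 <= x <= s ->
  exists2 r, in01 r & x = s * r /\ persp psi s x = s * psi r.
Proof.
move=> /andP[x0 xs]; rewrite /persp; have [s0|sn0] := eqVneq s 0.
  by exists 0; [exact: in01_0 | rewrite s0 !mul0r; split=> //; lra].
have sp : 0 < s by rewrite lt_def sn0; lra.
exists (x / s); last by split=> //; field.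
by rewrite /in01 divr_ge0 ?(ltW sp) //= ler_pdivrMr // mul1r.
Qed.

Lemma persp_convex psi s1 s2 x1 x2 t :
  convex_on in01 psi -> 0 <= x1 <= s1 -> 0 <= x2 <= s2 -> 0 <= t <= 1 ->
  persp psi (t * s1 + (1 - t) * s2) (t * x1 + (1 - t) * x2)
    <= t * persp psi s1 x1 + (1 - t) * persp psi s2 x2.
Proof.
move=> cv h1 h2 /andP[t0 t1].
have s1_ge0 : 0 <= s1 by case/andP: h1; lra.
have s2_ge0 : 0 <= s2 by case/andP: h2; lra.
have [r1 r1_01 [-> ->]] := perspE psi h1.
have [r2 r2_01 [-> ->]] := perspE psi h2.
set s := t * s1 + (1 - t) * s2.
rewrite /persp; have [s0|sn0] := eqVneq s 0.
  have e1 : t * s1 = 0 by move: s0; rewrite /s; nra.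
  have e2 : (1 - t) * s2 = 0 by move: s0; rewrite /s; nra.
  by rewrite !mulrA e1 e2; lra.
have sp : 0 < s by rewrite lt_def sn0 /s; nra.
set l := t * s1 / s.
have l01 : 0 <= l <= 1.
  by rewrite /l divr_ge0 ?(ltW sp) ?mulr_ge0 //= ler_pdivrMr // mul1r /s; nra.
have -> : (t * (s1 * r1) + (1 - t) * (s2 * r2)) / s = l * r1 + (1 - l) * r2.
  by rewrite /l /s; field; rewrite -/s.
have -> : t * (s1 * psi r1) + (1 - t) * (s2 * psi r2) = s * (l * psi r1 + (1 - l) * psi r2).
  by rewrite /l /s; field; rewrite -/s.
by rewrite ler_wpM2l ?(ltW sp) // cv.
Qed.

Lemma persp_nondecr psi s x x' :
  nondecr_on in01 psi -> 0 <= x -> x <= x' -> x' <= s -> persp psi s x <= persp psi s x'.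
Proof.
move=> mo x0 xx' x's; rewrite /persp; have [//|sn0] := eqVneq s 0.
have sp : 0 < s by rewrite lt_def sn0; lra.
have in01_div u : 0 <= u <= s -> in01 (u / s).
  by case/andP=> u0 us; rewrite /in01 divr_ge0 ?(ltW sp) //= ler_pdivrMr // mul1r.
rewrite ler_wpM2l ?(ltW sp) //; apply: mo; rewrite ?ler_pM2r ?invr_gt0 //.
  by apply: in01_div; apply/andP; split; lra.
by apply: in01_div; apply/andP; split; lra.
Qed.

Lemma convex_nondecr_in01 f :
  convex_on in01 f -> (forall a, in01 a -> f 0 <= f a) -> nondecr_on in01 f.
Proof.
move=> cv f0_min x y hx hy xy.
move: (hx) (hy) => /andP[x0 x1] /andP[y0 y1].
have [y_eq0|yn0] := eqVneq y 0; first by have -> : x = y by lra.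
have yp : 0 < y by rewrite lt_def yn0.
(* [x] is a convex combination of [0] and [y] *)
set t := 1 - x / y.
have t01 : 0 <= t <= 1.
  by rewrite /t subr_ge0 ler_pdivrMr // mul1r xy /= lerBlDr lerDl divr_ge0.
have := cv 0 y t in01_0 hy t01.
have -> : t * 0 + (1 - t) * y = x by rewrite /t; field.
by have := f0_min y hy; move: t01 => /andP[? ?]; nra.
Qed.

Lemma convex_mulr psi b :
  convex_on in01 psi -> in01 b -> convex_on in01 (fun a => psi (a * b)).
Proof.
move=> cv /andP[b0 b1] a1 a2 t /andP[? ?] /andP[? ?] /andP[? ?].
rewrite mulrDl -!mulrA; apply: cv => //; apply/andP; split; nra.
Qed.

Lemma nondecr_mulr psi b :
  nondecr_on in01 psi -> in01 b -> nondecr_on in01 (fun a => psi (a * b)).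
Proof.
move=> mo /andP[b0 b1] a1 a2 /andP[? ?] /andP[? ?] a12.
by apply: mo; rewrite ?ler_wpM2r //; apply/andP; split; nra.
Qed.

End Convexity.
Arguments in01 {R}.
Arguments in01_0 {R}.
Arguments in01_1 {R}.

Section PlusKernel.
Variables (R : realFieldType) (psi : R -> R).
Implicit Types a b : R.

(* Given [|Delta_W(y1)| = a] and [|Delta_W(y2)| = b], the revealed bit of [W^+] takes its two
   values with probabilities [(1 +- ab)/2], leaving [|Delta| = |a + b|/(1 + ab)] resp.
   [|b - a|/(1 - ab)]; this is the resulting conditional mean of [psi(|Delta_{W^+}|)]. *)
Definition plus_kernel a b :=
  (persp psi (1 + a * b) `|a + b| + persp psi (1 - a * b) `|b - a|) / 2.

Lemma plus_kernelC a b : plus_kernel a b = plus_kernel b a.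
Proof. by rewrite /plus_kernel (mulrC a b) (addrC a b) distrC. Qed.

Lemma plus_kernelNl a b : plus_kernel (- a) b = plus_kernel a b.
Proof.
by rewrite /plus_kernel mulNr !opprK [in LHS]addrC (addrC b a) (addrC (- a) b).
Qed.

Lemma plus_kernel_norm a b : plus_kernel a b = plus_kernel `|a| `|b|.
Proof.
have norm_l u v : plus_kernel u v = plus_kernel `|u| v.
  by have [u0|u0] := leP 0 u; rewrite ?(ger0_norm u0) ?(ltr0_norm u0) ?plus_kernelNl.
by rewrite norm_l plus_kernelC norm_l plus_kernelC.
Qed.

Lemma norm_addr_in01 a b : in01 a -> in01 b -> 0 <= `|a + b| <= 1 + a * b.
Proof. by move=> /andP[? ?] /andP[? ?]; rewrite ger0_norm; [apply/andP; split; nra | lra]. Qed.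

Lemma norm_subr_in01 a b : in01 a -> in01 b -> 0 <= `|b - a| <= 1 - a * b.
Proof.
by move=> /andP[? ?] /andP[? ?]; rewrite normr_ge0 /= ler_norml; apply/andP; split; nra.
Qed.

Lemma plus_kernel0l b : in01 b -> plus_kernel 0 b = psi b.
Proof.
case/andP=> b0 _; rewrite /plus_kernel mul0r addr0 subr0 add0r subr0 ger0_norm //.
by rewrite /persp oner_eq0 divr1 mul1r; field.
Qed.

Hypotheses (psi_cvx : convex_on in01 psi) (psi_mono : nondecr_on in01 psi).

Lemma plus_kernel_ge a b : in01 a -> in01 b -> psi b <= plus_kernel a b.
Proof.
move=> ha hb; rewrite /plus_kernel.
have [u u01 [hu ->]] := perspE psi (norm_addr_in01 ha hb).
have [v v01 [hv ->]] := perspE psi (norm_subr_in01 ha hb).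
move: ha hb => /andP[? ?] /andP[? ?].
set t := (1 + a * b) / 2.
have t01 : 0 <= t <= 1 by rewrite /t; apply/andP; split; nra.
have -> : ((1 + a * b) * psi u + (1 - a * b) * psi v) / 2 = t * psi u + (1 - t) * psi v.
  by rewrite /t; field.
apply: le_trans (psi_cvx u01 v01 t01).
have -> : t * u + (1 - t) * v = (`|a + b| + `|b - a|) / 2 by rewrite /t hu hv; field.
have hab : `|a + b| = a + b by rewrite ger0_norm; lra.
rewrite hab; have [ab|ba] := leP a b.
  by rewrite ger0_norm ?subr_ge0 //; apply: psi_mono => //; rewrite /in01; lra.
by rewrite ltr0_norm ?subr_lt0 //; apply: psi_mono => //; rewrite /in01; lra.
Qed.

Lemma plus_kernel_convex b : in01 b -> convex_on in01 (plus_kernel^~ b).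
Proof.
move=> hb a1 a2 t ha1 ha2 ht.
have d11 := norm_addr_in01 ha1 hb; have d12 := norm_addr_in01 ha2 hb.
have d21 := norm_subr_in01 ha1 hb; have d22 := norm_subr_in01 ha2 hb.
move: (ha1) (ha2) (hb) (ht) => /andP[? ?] /andP[? ?] /andP[? ?] /andP[? ?].
rewrite /plus_kernel.
have E1 : 1 + (t * a1 + (1 - t) * a2) * b = t * (1 + a1 * b) + (1 - t) * (1 + a2 * b) by ring.
have E2 : `|t * a1 + (1 - t) * a2 + b| = t * `|a1 + b| + (1 - t) * `|a2 + b|.
  by rewrite !ger0_norm //; nra.
have E3 : 1 - (t * a1 + (1 - t) * a2) * b = t * (1 - a1 * b) + (1 - t) * (1 - a2 * b) by ring.
have E4 : `|b - (t * a1 + (1 - t) * a2)| <= t * `|b - a1| + (1 - t) * `|b - a2|.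
  have -> : b - (t * a1 + (1 - t) * a2) = t * (b - a1) + (1 - t) * (b - a2) by ring.
  apply: le_trans (ler_normD _ _) _.
  by rewrite !normrM (ger0_norm (x := t)) // (ger0_norm (x := 1 - t)) //; lra.
rewrite E1 E2 E3.
have C1 := persp_convex psi_cvx d11 d12 ht.
have C2 := persp_convex psi_cvx d21 d22 ht.
have M : persp psi (t * (1 - a1 * b) + (1 - t) * (1 - a2 * b)) `|b - (t * a1 + (1 - t) * a2)|
   <= persp psi (t * (1 - a1 * b) + (1 - t) * (1 - a2 * b)) (t * `|b - a1| + (1 - t) * `|b - a2|).
  by move: d21 d22 => /andP[? ?] /andP[? ?]; apply: persp_nondecr => //; nra.
lra.
Qed.

Lemma plus_kernel_nondecr b : in01 b -> nondecr_on in01 (plus_kernel^~ b).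
Proof.
move=> hb; apply: convex_nondecr_in01; first exact: plus_kernel_convex.
by move=> a ha; rewrite plus_kernel0l //; apply: plus_kernel_ge.
Qed.

End PlusKernel.

Section AffineExtension.
Variable R : realFieldType.
Implicit Types (f psi : R -> R) (c k t x y : R).

Definition glue_affine f c k x := if x <= c then f x else f c + k * (x - c).

Lemma glue_affine_convex_le f c k x y t :
  convex_on (fun x => x <= c) f -> (forall x, x <= c -> f c + k * (x - c) <= f x) ->
  x <= y -> 0 <= t <= 1 ->
  glue_affine f c k (t * x + (1 - t) * y)
    <= t * glue_affine f c k x + (1 - t) * glue_affine f c k y.
Proof.
move=> cv below xy /andP[t0 t1]; rewrite /glue_affine.
set z := t * x + (1 - t) * y.
have xz : x <= z by rewrite /z; nra.
have zy : z <= y by rewrite /z; nra.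
have [yc|cy] := leP y c.
  rewrite (le_trans zy yc) (le_trans xz (le_trans zy yc)).
  by apply: cv; rewrite ?t0 ?t1 //; lra.
have [xc|cx] := leP x c; last by rewrite (leNgt z c) (lt_le_trans cx xz) /= /z; lra.
have [zc|cz] := leP z c; last by have := below x xc; rewrite /z; nra.
have [x_eq_c|xnc] := eqVneq x c.
  have t_eq1 : t = 1 by move: zc; rewrite /z x_eq_c => ?; nra.
  by rewrite /z t_eq1 x_eq_c subrr !mul0r mul1r !addr0; lra.
have cxp : 0 < c - x by rewrite subr_gt0 lt_def eq_sym xnc xc.
(* [z] is a convex combination of [x] and [c] *)
set s := (c - z) / (c - x).
have s01 : 0 <= s <= 1.
  by rewrite /s divr_ge0 ?(ltW cxp) ?subr_ge0 //= ler_pdivrMr // mul1r; lra.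
have ez : z = s * x + (1 - s) * c by rewrite /s; field; lra.
apply: (le_trans (_ : _ <= s * f x + (1 - s) * f c)).
  by rewrite {1}ez; apply: cv; rewrite ?t0 //; apply/andP.
have gap : 0 <= (1 - t) * (y - c) * (f x - (f c + k * (x - c))) / (c - x).
  by rewrite divr_ge0 ?(ltW cxp) // !mulr_ge0 // ?subr_ge0 ?below //; lra.
have E : t * f x + (1 - t) * (f c + k * (y - c)) - (s * f x + (1 - s) * f c)
    = (1 - t) * (y - c) * (f x - (f c + k * (x - c))) / (c - x).
  by rewrite /s /z; field; lra.
lra.
Qed.

Lemma glue_affine_convex f c k :
  convex_on (fun x => x <= c) f -> (forall x, x <= c -> f c + k * (x - c) <= f x) ->
  convex_on (fun _ => True) (glue_affine f c k).
Proof.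
move=> cv below x y t _ _ ht.
have [xy|yx] := leP x y; first exact: glue_affine_convex_le.
have ht' : 0 <= 1 - t <= 1 by move: ht => /andP[? ?]; apply/andP; split; lra.
have := glue_affine_convex_le cv below (ltW yx) ht'.
have -> : 1 - (1 - t) = t by ring.
by rewrite (addrC ((1 - t) * y)) (addrC ((1 - t) * _)).
Qed.

Lemma max0_convex x y t : 0 <= t <= 1 ->
  Num.max (t * x + (1 - t) * y) 0 <= t * Num.max x 0 + (1 - t) * Num.max y 0.
Proof.
move=> /andP[t0 t1].
have [x_le x0_le] : x <= Num.max x 0 /\ 0 <= Num.max x 0 by rewrite !le_max !lexx orbT.
have [y_le y0_le] : y <= Num.max y 0 /\ 0 <= Num.max y 0 by rewrite !le_max !lexx orbT.
by rewrite ge_max; apply/andP; split; nra.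
Qed.

Lemma max0_nondecr x y : x <= y -> Num.max x 0 <= Num.max y 0.
Proof. by move=> xy; rewrite ge_max !le_max lexx xy !orbT. Qed.

End AffineExtension.

Section ConvexExtension.
Variables (R : realFieldType) (psi : R -> R) (c : R).
Hypotheses (psi_cvx : convex_on in01 psi) (psi_mono : nondecr_on in01 psi).
Hypotheses (c_ge0 : 0 <= c) (c_lt1 : c < 1).
Implicit Types x y : R.

Let f x := psi (Num.max x 0).
(* the slope of the chord of [psi] over [[c, 1]]; by convexity that chord, extended to the
   left, stays below [psi] on [[0, c]] *)
Let k := (psi 1 - psi c) / (1 - c).

Let fc : f c = psi c. Proof. by rewrite /f max_l. Qed.

Let k_ge0 : 0 <= k.
Proof.
rewrite /k divr_ge0 // subr_ge0 ?(ltW c_lt1) //.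
by apply: psi_mono; rewrite /in01 ?c_ge0 ?ler01 ?lexx ?(ltW c_lt1).
Qed.

Lemma max0_in01 x : x <= c -> in01 (Num.max x 0).
Proof.
move=> xc; rewrite /in01 le_max lexx orbT /= ge_max ler01 andbT.
by apply: le_trans xc (ltW c_lt1).
Qed.

Lemma convex_clamped : convex_on (fun x => x <= c) f.
Proof.
move=> x y t xc yc t01; rewrite /f.
have hx := max0_in01 xc; have hy := max0_in01 yc.
apply: le_trans (psi_cvx hx hy t01); apply: psi_mono; last exact: max0_convex.
  apply: max0_in01; move: t01 => /andP[? ?]; nra.
move: hx hy t01; rewrite /in01 => /andP[? ?] /andP[? ?] /andP[? ?].
by apply/andP; split; nra.
Qed.

Lemma chord_below x : x <= c -> f c + k * (x - c) <= f x.
Proof.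
have chord0 u : 0 <= u -> u <= c -> f c + k * (u - c) <= f u.
  move=> u0 uc; rewrite fc /f max_l //.
  set mu := (1 - c) / (1 - u).
  have u_lt1 : u < 1 by apply: le_lt_trans c_lt1.
  have hu : in01 u by rewrite /in01 u0 ltW.
  have mu01 : 0 <= mu <= 1.
    rewrite /mu divr_ge0 ?subr_ge0 ?(ltW c_lt1) ?(ltW u_lt1) //=.
    by rewrite ler_pdivrMr ?subr_gt0 // mul1r lerB.
  have := psi_cvx hu in01_1 mu01.
  have -> : mu * u + (1 - mu) * 1 = c by rewrite /mu; field; lra.
  have E : psi u - (psi c + k * (u - c))
      = (1 - u) / (1 - c) * (mu * psi u + (1 - mu) * psi 1 - psi c).
    by rewrite /k /mu; field; rewrite !subr_eq0 (gt_eqF u_lt1) (gt_eqF c_lt1).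
  have : 0 <= (1 - u) / (1 - c) by rewrite divr_ge0 // subr_ge0 ltW.
  nra.
move=> xc; have [x0|x0] := leP 0 x; first exact: chord0.
have -> : f x = f 0 by rewrite /f !max_r // ltW.
by have := chord0 0 (lexx 0) c_ge0; have := k_ge0; nra.
Qed.

(* [c < 1] is needed: [psi] may jump at [1], which no convex function on [R] can follow. *)
Lemma convex_extension : exists psi' : R -> R,
  [/\ convex_on (fun _ => True) psi', nondecr_on (fun _ => True) psi' &
      forall x, (0 <= x <= c) \/ x = 1 -> psi' x = psi x].
Proof.
exists (glue_affine f c k); split.
- exact: glue_affine_convex convex_clamped chord_below.
- move=> x y _ _ xy; rewrite /glue_affine.
  have f_mono u v : u <= v -> v <= c -> f u <= f v.
    move=> uv vc; apply: psi_mono; rewrite ?max0_nondecr //; apply: max0_in01 => //.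
    exact: le_trans vc.
  have [yc|cy] := leP y c; first by rewrite (le_trans xy yc) f_mono.
  have := k_ge0; have [xc|cx] := leP x c; last by nra.
  by have := f_mono x c xc (lexx c); nra.
- move=> x [/andP[x0 xc]|->]; first by rewrite /glue_affine xc /f max_l.
  by rewrite /glue_affine leNgt c_lt1 /= fc /k; field; rewrite subr_eq0 (gt_eqF c_lt1).
Qed.

End ConvexExtension.

Section ChannelExpectations.
Variable R : realFieldType.
Implicit Types (U W : bdmc R) (psi : R -> R).

Definition nonneg_bdmc W := forall y u, 0 <= tr W y u.

Lemma nonneg_minus_ch W : nonneg_bdmc W -> nonneg_bdmc (minus_ch W).
Proof.
move=> W_ge0 y u; rewrite /= big_bool /=.
by have := W_ge0 y.1 (~~ u); have := W_ge0 y.1 u; have := W_ge0 y.2 true;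
   have := W_ge0 y.2 false; rewrite addbT addbF; nra.
Qed.

Lemma nonneg_plus_ch W : nonneg_bdmc W -> nonneg_bdmc (plus_ch W).
Proof.
by move=> W_ge0 y u /=; have := W_ge0 y.1.1 (addb y.2 u); have := W_ge0 y.1.2 u; nra.
Qed.

Lemma nonneg_step W b : nonneg_bdmc W -> nonneg_bdmc (step W b).
Proof. by case: b; [exact: nonneg_plus_ch | exact: nonneg_minus_ch]. Qed.

Lemma qW_DeltaW_persp U (y : out U) psi q s z : 0 <= s ->
  tr U y false + tr U y true = q * s -> tr U y false - tr U y true = q * z ->
  qW y * psi `|DeltaW y| = 2^-1 * q * persp psi s `|z|.
Proof.
move=> s_ge0 sum_eq diff_eq; rewrite /DeltaW /qW sum_eq diff_eq /persp.
have [->|qn0] := eqVneq q 0; first by rewrite !mul0r mulr0 mul0r.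
have [->|sn0] := eqVneq s 0; first by rewrite mulr0 !mul0r mulr0.
have sp : 0 < s by rewrite lt_def sn0.
have -> : (q * s / 2 == 0) = false.
  by rewrite !mulf_eq0 invr_eq0 (negbTE qn0) (negbTE sn0) pnatr_eq0.
have -> : q * z / (q * s) = z / s by field; apply/andP.
by rewrite normrM normfV (gtr0_norm sp); field.
Qed.

Section NonnegChannel.
Variables (W : bdmc R) (W_ge0 : nonneg_bdmc W).
Implicit Type y : out W.

Lemma qW_ge0 y : 0 <= qW y.
Proof. by have := W_ge0 y false; have := W_ge0 y true; rewrite /qW; lra. Qed.

Lemma tr_qW_DeltaW y :
  tr W y false = qW y * (1 + DeltaW y) /\ tr W y true = qW y * (1 - DeltaW y).
Proof.
have := W_ge0 y false; have := W_ge0 y true.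
rewrite /DeltaW /qW; case: eqP => [q0|/eqP qn0] a0 b0.
  have -> : tr W y false = 0 by lra.
  have -> : tr W y true = 0 by lra.
  by split; ring.
have sn0 : tr W y false + tr W y true != 0 by apply: contraNneq qn0 => ->; rewrite mul0r.
by split; field.
Qed.

Lemma DeltaW_in01 y : in01 `|DeltaW y|.
Proof.
have a0 := W_ge0 y false; have b0 := W_ge0 y true.
rewrite /in01 normr_ge0 /= /DeltaW; case: eqP => [_|/eqP qn0]; first by rewrite normr0 ler01.
have sp : 0 < tr W y false + tr W y true.
  by rewrite lt_def addr_ge0 // andbT; apply: contraNneq qn0 => s0; rewrite /qW s0 mul0r.
by rewrite normrM normfV (gtr0_norm sp) ler_pdivrMr // mul1r ler_norml; apply/andP; split; lra.
Qed.

Lemma Eabs_minus_ch psi : Eabs (minus_ch W) psi =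
  \sum_(y1 : out W) \sum_(y2 : out W) qW y1 * qW y2 * psi (`|DeltaW y1| * `|DeltaW y2|).
Proof.
rewrite pair_bigA /Eabs; apply: eq_bigr => -[y1 y2] _.
have [a1 b1] := tr_qW_DeltaW y1; have [a2 b2] := tr_qW_DeltaW y2.
rewrite (@qW_DeltaW_persp (minus_ch W) (y1, y2) psi (qW y1 * qW y2) 2
  (2 * (DeltaW y1 * DeltaW y2))) ?ler0n //=; last first.
- by rewrite !big_bool /= a1 b1 a2 b2; field.
- by rewrite !big_bool /= a1 b1 a2 b2; field.
rewrite /persp pnatr_eq0 /= normrM (ger0_norm (ler0n _ 2)).
have -> : 2 * `|DeltaW y1 * DeltaW y2| / 2 = `|DeltaW y1 * DeltaW y2| by field.
by rewrite normrM; field.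
Qed.

Lemma Eabs_plus_ch psi : Eabs (plus_ch W) psi =
  \sum_(y1 : out W) \sum_(y2 : out W) qW y1 * qW y2 * plus_kernel psi `|DeltaW y1| `|DeltaW y2|.
Proof.
rewrite pair_bigA /Eabs.
have -> : \sum_(y : out (plus_ch W)) qW y * psi `|DeltaW y| =
    \sum_(p : out W * out W) \sum_(u : bool)
      qW (W := plus_ch W) (p, u) * psi `|DeltaW (W := plus_ch W) (p, u)|.
  by rewrite pair_bigA; apply: eq_bigr => -[p u] _.
apply: eq_bigr => -[y1 y2] _; rewrite big_bool /= -plus_kernel_norm.
have [a1 b1] := tr_qW_DeltaW y1; have [a2 b2] := tr_qW_DeltaW y2.
have := DeltaW_in01 y1; have := DeltaW_in01 y2.
rewrite /in01 !ler_norml => /andP[_ /andP[? ?]] /andP[_ /andP[? ?]].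
rewrite (@qW_DeltaW_persp (plus_ch W) ((y1, y2), true) psi (qW y1 * qW y2)
  (1 - DeltaW y1 * DeltaW y2) (DeltaW y2 - DeltaW y1)) /=; first last.
- by rewrite a1 b1 a2 b2; field.
- by rewrite a1 b1 a2 b2; field.
- nra.
rewrite (@qW_DeltaW_persp (plus_ch W) ((y1, y2), false) psi (qW y1 * qW y2)
  (1 + DeltaW y1 * DeltaW y2) (DeltaW y1 + DeltaW y2)) /=; first last.
- by rewrite a1 b1 a2 b2; field.
- by rewrite a1 b1 a2 b2; field.
- nra.
by rewrite /plus_kernel; field.
Qed.

End NonnegChannel.
End ChannelExpectations.

Section IcxOrder.
Variable R : realFieldType.
Implicit Types (V W : bdmc R) (psi : R -> R).

Definition icx_le01 V W := forall psi, convex_on in01 psi -> nondecr_on in01 psi ->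
  Eabs V psi <= Eabs W psi.

Lemma double_sumE U (h : R -> R -> R) :
  \sum_(y1 : out U) \sum_(y2 : out U) qW y1 * qW y2 * h `|DeltaW y1| `|DeltaW y2|
  = \sum_(y2 : out U) qW y2 * Eabs U (h^~ `|DeltaW y2|).
Proof.
rewrite exchange_big; apply: eq_bigr => y2 _; rewrite /Eabs mulr_sumr.
by apply: eq_bigr => y1 _; ring.
Qed.

Lemma mixed_sumC U1 U2 (h : R -> R -> R) : (forall a b, h a b = h b a) ->
  \sum_(u : out U1) qW u * Eabs U2 (h^~ `|DeltaW u|)
  = \sum_(v : out U2) qW v * Eabs U1 (h^~ `|DeltaW v|).
Proof.
move=> hC; rewrite /Eabs; under eq_bigr do rewrite mulr_sumr.
rewrite exchange_big; apply: eq_bigr => v _; rewrite mulr_sumr.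
by apply: eq_bigr => u _; rewrite hC; ring.
Qed.

Lemma icx_le01_kernel V W (h : R -> R -> R) :
  nonneg_bdmc V -> nonneg_bdmc W -> icx_le01 V W -> (forall a b, h a b = h b a) ->
  (forall b, in01 b -> convex_on in01 (h^~ b) /\ nondecr_on in01 (h^~ b)) ->
  \sum_(y1 : out V) \sum_(y2 : out V) qW y1 * qW y2 * h `|DeltaW y1| `|DeltaW y2|
  <= \sum_(z1 : out W) \sum_(z2 : out W) qW z1 * qW z2 * h `|DeltaW z1| `|DeltaW z2|.
Proof.
move=> V_ge0 W_ge0 VW hC h_test.
have mix_le U (U_ge0 : nonneg_bdmc U) :
    \sum_(u : out U) qW u * Eabs V (h^~ `|DeltaW u|)
    <= \sum_(u : out U) qW u * Eabs W (h^~ `|DeltaW u|).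
  apply: ler_sum => u _; have [cv mo] := h_test _ (DeltaW_in01 U_ge0 u).
  by rewrite ler_wpM2l ?qW_ge0 // VW.
rewrite !double_sumE; apply: le_trans (mix_le _ V_ge0) _.
by rewrite mixed_sumC //; exact: mix_le.
Qed.

Lemma icx_le_icx_le01 V W :
  nonneg_bdmc V -> nonneg_bdmc W -> icx_le V W -> icx_le01 V W.
Proof.
move=> V_ge0 W_ge0 VW psi cv mo.
pose top (U : bdmc R) : R := \big[Num.max/0]_(y : out U | `|DeltaW y| < 1) `|DeltaW y|.
(* [c] is the largest value below [1] taken by [|Delta_V|] or [|Delta_W|] *)
pose c := Num.max (top V) (top W).
have c_ge0 : 0 <= c by rewrite le_max bigmax_ge_id.
have c_lt1 : c < 1 by rewrite gt_max !bigmax_lt.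
have [psi' [cv' mo' agree]] := convex_extension cv mo c_ge0 c_lt1.
have Eabs_psi' U : nonneg_bdmc U -> top U <= c -> Eabs U psi = Eabs U psi'.
  move=> U_ge0 topc; apply: eq_bigr => y _; congr (_ * _); symmetry; apply: agree.
  have /andP[d0 d1] := DeltaW_in01 U_ge0 y.
  have [lt1|] := ltP `|DeltaW y| 1; last by right; apply: le_anti; rewrite d1.
  by left; rewrite d0 (le_trans _ topc) // le_bigmax_cond.
rewrite !Eabs_psi' //; [exact: VW | by rewrite le_max lexx orbT | by rewrite le_max lexx].
Qed.

Lemma icx_le01_step V W b : nonneg_bdmc V -> nonneg_bdmc W ->
  icx_le01 V W -> icx_le01 (step V b) (step W b).
Proof.
move=> V_ge0 W_ge0 VW psi cv mo; case: b => /=.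
  rewrite !Eabs_plus_ch //; apply: icx_le01_kernel => //; first exact: plus_kernelC.
  by move=> b hb; split; [exact: plus_kernel_convex | exact: plus_kernel_nondecr].
rewrite !Eabs_minus_ch //; apply: (icx_le01_kernel (h := fun a b => psi (a * b))) => //.
  by move=> a b; rewrite mulrC.
by move=> b hb; split; [exact: convex_mulr | exact: nondecr_mulr].
Qed.

Lemma icx_le01_polar s V W : nonneg_bdmc V -> nonneg_bdmc W ->
  icx_le01 V W -> icx_le01 (polar V s) (polar W s).
Proof.
elim: s V W => [|b s IH] V W V_ge0 W_ge0 VW //=.
by apply: IH; [exact: nonneg_step | exact: nonneg_step | exact: icx_le01_step].
Qed.

End IcxOrder.

Unset Implicit Arguments.
Theorem corollary1 (R : realFieldType) (W V : bdmc R) :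
  is_bdmc W -> is_bdmc V -> icx_le V W ->
  forall (eps : R) (phi : R -> R),
    0 < eps < 1 ->
    convex_on (fun x => 0 <= x <= 1) phi ->
    nondecr_on (fun x => 0 <= x <= 1) phi ->
    phi 0 = 0 -> phi 1 = 1 ->
    forall (n : nat), (1 <= n)%N ->
    forall s : seq pm, size s = n ->
      infoset V phi eps s -> infoset W phi eps s.
Proof.
move=> [W_ge0 _] [V_ge0 _] VW eps phi _ phi_cvx phi_mono _ _ n _ s _.
rewrite /infoset => /le_trans; apply.
exact: icx_le01_polar (icx_le_icx_le01 V_ge0 W_ge0 VW) _ phi_cvx phi_mono.
Qed.
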